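(* Every $(K_4-e)$-design $(X,\mathcal B)$ of order $10$ contains a subdesign of order $6$; that is, there exist a $6$-element subset $Y\subseteq X$ and a subcollection $\mathcal B'\subseteq\mathcal B$ such that $(Y,\mathcal B')$ is a $(K_4-e)$-design of order $6$.
   Context: $K_4-e$ is the graph on four vertices $a,b,c,d$ with edges $ab,ac,ad,bc,bd$; it is denoted $[a,b,c-d]$. A $(K_4-e)$-design of order $v$ is a pair $(X,\mathcal B)$ where $X$ is a set of $v$ vertices and $\mathcal B$ is a collection of copies of $K_4-e$ (called blocks) with vertices in $X$ whose edge sets partition the edge set of the complete graph $K_v$ on $X$. *)

From mathcomp Require Import all_boot.
Set Implicit Arguments. Unset Strict Implicit. Unset Printing Implicit Defensive.

(* A copy of K_4 - e, written [a,b,c-d], is given by its four vertices (a,b,c,d):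
   vertices a b c d, edges ab ac ad bc bd (cd is the missing edge). *)
Definition block (T : finType) := (T * T * T * T)%type.

Definition bverts (T : finType) (B : block T) : seq T :=
  let: (a, b, c, d) := B in [:: a; b; c; d].

Definition bedges (T : finType) (B : block T) : seq {set T} :=
  let: (a, b, c, d) := B in
  [:: [set a; b]; [set a; c]; [set a; d]; [set b; c]; [set b; d]].

Definition K4e_design (T : finType) (X : {set T}) (Bs : seq (block T)) : Prop :=
  (forall B, B \in Bs -> uniq (bverts B) /\ {subset bverts B <= X}) /\
  (forall x y, x \in X -> y \in X -> x != y ->
     count (fun B => [set x; y] \in bedges B) Bs = 1%N).

From mathcomp Require Import all_boot zify.
Set Implicit Arguments. Unset Strict Implicit. Unset Printing Implicit Defensive.

(* If a vertex x of a design of order 10 is a degree-3 vertex of p blocks and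
   a degree-2 vertex of q blocks, then 3p + 2q = 9, so (p, q) is (3, 0) or
   (1, 3).  Summing p, and q, over all vertices gives twice the number of
   blocks in both cases, so exactly six vertices have q = 3; call them Y.
   A vertex w outside Y meets the three other vertices outside Y only through
   its three blocks, in which the degree-2 vertices lie in Y; so the other
   degree-3 vertex of each of these blocks is outside Y as well.  Hence a block
   containing an edge inside Y lies entirely inside Y, and these blocks form a
   subdesign on Y. *)

Section Counting.

Variable I : eqType.

Lemma count_sum (a : pred I) (s : seq I) : count a s = \sum_(i <- s) a i.
Proof. by rewrite -sum1_count big_mkcond. Qed.

Lemma count_eq0P (a : pred I) (s : seq I) : count a s = 0 -> {in s, forall i, ~~ a i}.
Proof. by move/eqP; rewrite eqn0Ngt -has_count => /hasPn. Qed.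

Lemma count_predI_eq (a r : pred I) (s : seq I) :
  count (predI a r) s = count a s -> {in s, forall i, a i -> r i}.
Proof.
rewrite (eq_count (fun i => andbC (a i) (r i))) -count_filter.
rewrite -[count a s]size_filter => /eqP; rewrite -all_count => /allP ar i si ai.
by apply: ar; rewrite mem_filter ai.
Qed.

End Counting.

Section FinCounting.

Variable T : finType.
Implicit Types (A S : {set T}) (s : seq T).

Lemma sum_bool_card A (P : pred T) : \sum_(x in A) (P x : nat) = #|[set x in A | P x]|.
Proof.
rewrite -sum1_card big_mkcond [RHS]big_mkcond; apply: eq_big => // x _.
by rewrite inE; case: (x \in A); case: (P x).
Qed.

Lemma sum_mem_uniq S s : uniq s -> \sum_(y in S) (y \in s : nat) = count (mem S) s.
Proof.
move=> us; rewrite count_sum big_uniq //= big_mkcond [RHS]big_mkcond /=.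
by apply: eq_bigr => y _; case: (y \in S); case: (y \in s).
Qed.

Lemma card_set2_in A u v : u != v -> u \in A -> v \in A ->
  #|[set x in A | (x == u) || (x == v)]| = 2.
Proof.
move=> uv uA vA.
suff -> : [set x in A | (x == u) || (x == v)] = [set u; v] by rewrite cards2 uv.
by apply/setP => x; rewrite !inE andb_idl // => /orP[]/eqP->.
Qed.

End FinCounting.

Section Blocks.

Variable T : finType.
Implicit Types (B : block T) (S X Y : {set T}) (x y : T).

Lemma eq_set2E x y u v : u != v ->
  ([set x; y] == [set u; v]) = (x == u) && (y == v) || (x == v) && (y == u).
Proof.
move=> uv; apply/eqP/idP => [E|/orP[]/andP[/eqP-> /eqP->] //]; last exact: setUC.
have: u \in [set x; y] by rewrite E set21.
have: v \in [set x; y] by rewrite E set22.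
by do 2!case/set2P=> ?; subst; rewrite ?eqxx ?orbT // in uv *.
Qed.

Definition is_deg3 x B : bool := let: (a, b, _, _) := B in (x == a) || (x == b).
Definition is_deg2 x B : bool := let: (_, _, c, d) := B in (x == c) || (x == d).
Definition deg3_mate x B : T := let: (a, b, _, _) := B in if x == a then b else a.

Definition bnbrs B x : seq T :=
  let: (a, b, c, d) := B in
  if x == a then [:: b; c; d] else if x == b then [:: a; c; d]
  else if (x == c) || (x == d) then [:: a; b] else [::].

Lemma mem_bnbrs B x y : uniq (bverts B) ->
  ([set x; y] \in bedges B) = (y \in bnbrs B x).
Proof.
case: B => [[[a b] c] d]; rewrite /= !inE !negb_or.
move=> /and4P[/and3P[ab ac ad] /andP[bc bd] cd _].
rewrite !eq_set2E //.
have N := (negbTE ab, negbTE ac, negbTE ad, negbTE bc, negbTE bd, negbTE cd).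
have [->|_] := eqVneq x a; first by rewrite !inE !N /= ?orbF.
have [->|_] := eqVneq x b; first by rewrite !inE !N /= ?orbF.
have [->|_] := eqVneq x c; first by rewrite !inE !N /= ?orbF ?andbF.
by have [_|_] := eqVneq x d; rewrite ?inE ?N /= ?orbF ?andbF.
Qed.

Lemma bnbrs_subseq B x : subseq (bnbrs B x) (bverts B).
Proof.
case: B => [[[a b] c] d]; cbn [bnbrs bverts].
have acd : subseq [:: a; c; d] [:: a; b; c; d].
  exact: (@cat_subseq _ [:: a] _ [:: a]) (subseq_cons [:: c; d] b).
have ab : subseq [:: a; b] [:: a; b; c; d] by exact: (prefix_subseq [:: a; b]).
by do 3?case: ifP => _; rewrite ?subseq_cons ?sub0seq.
Qed.

Lemma bnbrs_irr B x : uniq (bverts B) -> x \notin bnbrs B x.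
Proof.
case: B => [[[a b] c] d]; rewrite /= !inE !negb_or.
move=> /and4P[/and3P[ab ac ad] /andP[bc bd] cd _].
have [->|_] := eqVneq x a; first by rewrite !inE !negb_or ab ac ad.
have [->|_] := eqVneq x b; first by rewrite !inE !negb_or [b == a]eq_sym ab bc bd.
have [->|_] := eqVneq x c; first by rewrite !inE !negb_or ![c == _]eq_sym ac bc.
by have [->|_] := eqVneq x d; rewrite ?inE ?negb_or ?[d == _]eq_sym ?ad ?bd.
Qed.

Lemma size_bnbrs B x : uniq (bverts B) ->
  size (bnbrs B x) = 3 * is_deg3 x B + 2 * is_deg2 x B.
Proof.
case: B => [[[a b] c] d]; rewrite /= !inE !negb_or.
move=> /and4P[/and3P[ab ac ad] /andP[bc bd] cd _].
have [->|_] := eqVneq x a; first by rewrite (negbTE ac) (negbTE ad).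
have [->|_] := eqVneq x b; first by rewrite (negbTE bc) (negbTE bd).
by have [_|_] := eqVneq x c; have [_|_] := eqVneq x d.
Qed.

Lemma count_bnbrs_deg3 S B x : ~~ is_deg2 x B -> (forall v, is_deg2 v B -> v \notin S) ->
  count (mem S) (bnbrs B x) = is_deg3 x B && (deg3_mate x B \in S).
Proof.
case: B => [[[a b] c] d] /= /norP[xc xd] tipsS.
have /negbTE cS : c \notin S by apply: tipsS; rewrite eqxx.
have /negbTE dS : d \notin S by apply: tipsS; rewrite eqxx orbT.
have [_|_] := eqVneq x a; first by rewrite /= cS dS !addn0.
by have [_|_] := eqVneq x b; rewrite /= ?(negbTE xc) ?(negbTE xd) /= ?cS ?dS ?addn0.
Qed.

Lemma card_deg3 X B : uniq (bverts B) -> {subset bverts B <= X} ->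
  #|[set x in X | is_deg3 x B]| = 2.
Proof.
case: B => [[[a b] c] d]; rewrite /= !inE !negb_or.
move=> /and4P[/and3P[ab _ _] _ _ _] sBX.
by apply: card_set2_in; rewrite // sBX // !inE eqxx ?orbT.
Qed.

Lemma card_deg2 X B : uniq (bverts B) -> {subset bverts B <= X} ->
  #|[set x in X | is_deg2 x B]| = 2.
Proof.
case: B => [[[a b] c] d]; rewrite /= !inE !negb_or.
move=> /and4P[_ _ cd _] sBX.
by apply: card_set2_in; rewrite // sBX // !inE eqxx ?orbT.
Qed.

Lemma bverts_closed Y B x y : uniq (bverts B) ->
  {in bverts B, forall v, is_deg2 v B -> v \in Y} ->
  {in bverts B, forall v, is_deg3 v B -> v \notin Y -> deg3_mate v B \notin Y} ->
  x \in Y -> y \in Y -> [set x; y] \in bedges B -> all (mem Y) (bverts B).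
Proof.
case: B => [[[a b] c] d]; rewrite /= !inE !negb_or.
move=> /and4P[/and3P[ab _ _] _ _ _] tipsY mateY xY yY edge.
have cY : c \in Y by apply: tipsY; rewrite /= ?inE eqxx ?orbT.
have dY : d \in Y by apply: tipsY; rewrite /= ?inE eqxx ?orbT.
have abY : (a \in Y) || (b \in Y).
  have inY u v : [set x; y] == [set u; v] -> u \in Y.
    move/eqP=> E; have: u \in [set x; y] by rewrite E set21.
    by case/set2P=> ->.
  by move: edge; do 4![case/orP=> [/inY->|]; rewrite ?orbT //] => /inY->; rewrite orbT.
have aY_bY : a \notin Y -> b \notin Y.
  by move: (mateY a); rewrite !inE !eqxx; apply.
have bY_aY : b \notin Y -> a \notin Y.
  by move: (mateY b); rewrite !inE eqxx [b == a]eq_sym (negbTE ab) orbT; apply.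
rewrite cY dY andbT; case/orP: abY => [aY|bY].
  by rewrite aY (contraLR bY_aY aY).
by rewrite bY (contraLR aY_bY bY).
Qed.

End Blocks.

Section Design.

Variables (T : finType) (X : {set T}) (Bs : seq (block T)).
Hypothesis D : K4e_design X Bs.

Lemma design_uniq B : B \in Bs -> uniq (bverts B).
Proof. by case/(D.1 B). Qed.

Lemma design_sub B : B \in Bs -> {subset bverts B <= X}.
Proof. by case/(D.1 B). Qed.

Lemma design_sum_nbrs (S : {set T}) x : S \subset X -> x \in X ->
  \sum_(B <- Bs) count (mem S) (bnbrs B x) = #|S :\ x|.
Proof.
move=> sSX xX.
have deg y : y \in S -> count (fun B => y \in bnbrs B x) Bs = (y != x).
  have [->|yx] := eqVneq y x => yS.
    rewrite (eq_in_count (a2 := pred0)) ?count_pred0 //.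
    by move=> B /design_uniq/bnbrs_irr/negbTE.
  rewrite /= -(D.2 x y xX (subsetP sSX y yS)) 1?eq_sym //.
  by apply: eq_in_count => B /design_uniq uB; rewrite mem_bnbrs.
rewrite (eq_big_seq (fun B => \sum_(y in S) (y \in bnbrs B x : nat))); last first.
  by move=> B /design_uniq uB; rewrite sum_mem_uniq // (subseq_uniq (bnbrs_subseq B x)).
rewrite exchange_big /= (eq_bigr (fun y => (y != x : nat))); last first.
  by move=> y yS; rewrite -count_sum deg.
by rewrite sum_bool_card; apply: eq_card => y; rewrite !inE andbC.
Qed.

Lemma design_degree x : x \in X ->
  3 * count (is_deg3 x) Bs + 2 * count (is_deg2 x) Bs = #|X|.-1.
Proof.
move=> xX; rewrite [#|X|](cardsD1 x) xX -(design_sum_nbrs (subxx X) xX).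
rewrite !count_sum !big_distrr -big_split /=; apply: eq_big_seq => B BBs.
rewrite -size_bnbrs ?design_uniq //; apply/eqP; rewrite eq_sym -all_count.
by apply/allP => y /(mem_subseq (bnbrs_subseq B x)) /(design_sub BBs).
Qed.

Lemma sum_count_design (P : T -> block T -> bool) k :
  (forall B, B \in Bs -> #|[set x in X | P x B]| = k) ->
  \sum_(x in X) count (P x) Bs = k * size Bs.
Proof.
move=> cardP; under eq_bigr do rewrite count_sum.
rewrite exchange_big /= (eq_big_seq (fun=> k)) => [|B BBs]; last first.
  by rewrite (sum_bool_card X (P^~ B)) cardP.
by rewrite big_const_seq count_predT iter_addn_0.
Qed.

Lemma sum_count_deg3 : \sum_(x in X) count (is_deg3 x) Bs = 2 * size Bs.
Proof.
apply: sum_count_design => B BBs.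
exact: card_deg3 (design_uniq BBs) (design_sub BBs).
Qed.

Lemma sum_count_deg2 : \sum_(x in X) count (is_deg2 x) Bs = 2 * size Bs.
Proof.
apply: sum_count_design => B BBs.
exact: card_deg2 (design_uniq BBs) (design_sub BBs).
Qed.

Lemma design_mate_closed (W : {set T}) w B : W \subset X ->
    {in W, forall v, count (is_deg2 v) Bs = 0} ->
    w \in W -> count (is_deg3 w) Bs = #|W|.-1 ->
  B \in Bs -> is_deg3 w B -> deg3_mate w B \in W.
Proof.
move=> sWX no_deg2 wW degw.
apply: (count_predI_eq (r := fun B => deg3_mate w B \in W)).
rewrite degw [#|W|](cardsD1 w) wW -(design_sum_nbrs sWX (subsetP sWX w wW)) count_sum.
apply: eq_big_seq => B' B'Bs; rewrite count_bnbrs_deg3 ?(count_eq0P (no_deg2 w wW)) //.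
by move=> v vB'; apply: contraL vB' => /no_deg2/count_eq0P; apply.
Qed.

Lemma K4e_subdesign (Y : {set T}) : Y \subset X ->
    (forall B x y, B \in Bs -> x \in Y -> y \in Y -> x != y ->
       [set x; y] \in bedges B -> all (mem Y) (bverts B)) ->
  K4e_design Y [seq B <- Bs | all (mem Y) (bverts B)].
Proof.
move=> sYX closedY; split=> [B|x y xY yY xy].
  by rewrite mem_filter => /andP[/allP BY /design_uniq uB].
rewrite count_filter -(D.2 x y (subsetP sYX x xY) (subsetP sYX y yY) xy).
apply: eq_in_count => B BBs /=; apply/andP/idP => [[] //|edge].
by split=> //; apply: closedY edge.
Qed.

End Design.

Section Order10.

Variables (T : finType) (X : {set T}) (Bs : seq (block T)).
Hypotheses (D : K4e_design X Bs) (cardX : #|X| = 10).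

Definition deg2_verts : {set T} := [set x in X | count (is_deg2 x) Bs != 0].

Lemma mem_deg2_verts x :
  (x \in deg2_verts) = (x \in X) && (count (is_deg2 x) Bs != 0).
Proof. by rewrite inE. Qed.

(* 3 p + 2 q = 9 forces (p, q) = (3, 0) or (1, 3). *)
Lemma deg_counts10 x : x \in X ->
  count (is_deg3 x) Bs + 2 * (x \in deg2_verts) = 3 /\
  count (is_deg2 x) Bs = 3 * (x \in deg2_verts).
Proof.
move=> xX; have := design_degree D xX; rewrite cardX mem_deg2_verts xX /=.
by case: eqP => no_deg2 /=; lia.
Qed.

Lemma deg2_verts_sub : deg2_verts \subset X.
Proof. by apply/subsetP => x; rewrite mem_deg2_verts => /andP[]. Qed.

Lemma card_deg2_verts : #|deg2_verts| = 6.
Proof.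
have sum_verts : \sum_(x in X) (x \in deg2_verts : nat) = #|deg2_verts|.
  by rewrite sum_bool_card; apply: eq_card => x; rewrite !inE andbA andbb.
have sum3 : \sum_(x in X) count (is_deg3 x) Bs + 2 * #|deg2_verts| = 30.
  rewrite -sum_verts big_distrr -big_split /=.
  rewrite (eq_bigr (fun=> 3)) => [|x /deg_counts10[] //].
  by rewrite sum_nat_const cardX.
have sum2 : \sum_(x in X) count (is_deg2 x) Bs = 3 * #|deg2_verts|.
  by rewrite -sum_verts big_distrr; apply: eq_bigr => x /deg_counts10[].
by move: sum3 sum2; rewrite (sum_count_deg3 D) (sum_count_deg2 D); lia.
Qed.

Lemma deg2_verts_closed B x y : B \in Bs ->
    x \in deg2_verts -> y \in deg2_verts -> [set x; y] \in bedges B ->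
  all (mem deg2_verts) (bverts B).
Proof.
move=> BBs; apply: bverts_closed (design_uniq D BBs) _ _ => v vB.
  move=> v2; rewrite mem_deg2_verts (design_sub D BBs vB) -lt0n -has_count.
  by apply/hasP; exists B.
move=> v3 vY; set W := X :\: deg2_verts.
have cardW : #|W| = 4.
  by rewrite cardsD (setIidPr deg2_verts_sub) cardX card_deg2_verts.
have no_deg2 : {in W, forall w, count (is_deg2 w) Bs = 0}.
  by move=> w /setDP[wX]; rewrite mem_deg2_verts wX negbK => /eqP.
have vW : v \in W by rewrite inE vY (design_sub D BBs vB).
have deg3v : count (is_deg3 v) Bs = #|W|.-1.
  by have [+ _] := deg_counts10 (design_sub D BBs vB); rewrite (negbTE vY) cardW addn0.
by case/setDP: (design_mate_closed D (subsetDl X _) no_deg2 vW deg3v BBs v3).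
Qed.

End Order10.

Theorem lemma2p2 (T : finType) (X : {set T}) (Bs : seq (block T)) :
  #|X| = 10 -> K4e_design X Bs ->
  exists (Y : {set T}) (Bs' : seq (block T)),
    [/\ Y \subset X, #|Y| = 6, subseq Bs' Bs & K4e_design Y Bs'].
Proof.
move=> cardX D; set Y := deg2_verts X Bs.
exists Y, [seq B <- Bs | all (mem Y) (bverts B)].
split; [exact: deg2_verts_sub | exact: card_deg2_verts | exact: filter_subseq |].
apply: (K4e_subdesign D (deg2_verts_sub X Bs)) => B x y BBs xY yY _.
exact: deg2_verts_closed.
Qed.
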